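(* Let $\mathcal{L}(x^* )\in\mathbb{R}^{c\times c}$ be the weighted Laplacian of a complex-balanced mass action chemical reaction network with complex-equilibrium $x^*\in\mathbb{R}_+^m$ (defined in the context), and let $B\in\mathbb{R}^{c\times r}$ be the incidence matrix of its graph of complexes. Then for every $\gamma\in\mathbb{R}^c$, \[ \gamma^T\mathcal{L}(x^* )\,\mathrm{Exp}(\gamma)\ \ge\ 0, \] and $\gamma^T\mathcal{L}(x^* )\,\mathrm{Exp}(\gamma)=0$ if and only if $B^T\gamma=0$.
   Context: A mass action chemical reaction network has $m$ species with concentration vector $x\in\mathbb{R}_+^m$ (strictly positive entries), $c$ complexes and $r$ reactions. The complex-stoichiometric matrix $Z\in\mathbb{R}^{m\times c}$ has nonnegative integer entries; its $\alpha$-th column $Z_\alpha$ gives the composition of complex $\alpha$ in the species. The graph of complexes has the $c$ complexes as vertices and a directed edge for each reaction $j$, from its substrate complex $\mathcal{S}_j$ to its product complex $\mathcal{P}_j$; its incidence matrix $B\in\mathbb{R}^{c\times r}$ has $(\alpha,j)$ entry $-1$ if $\alpha=\mathcal{S}_j$, $+1$ if $\alpha=\mathcal{P}_j$, $0$ otherwise. Each reaction $j$ has rate constant $k_j>0$ and rate $v_j(x)=k_j\exp(Z_{\mathcal{S}_j}^T\mathrm{Ln}(x))$, and the dynamics are $\dot x=ZBv(x)$. For $x\in\mathbb{R}_+^m$, $\mathrm{Ln}(x)$ is the componentwise logarithm, and for $y\in\mathbb{R}^c$, $\mathrm{Exp}(y)$ is the componentwise exponential; $x/x^*$ denotes componentwise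 division. Let $a_{\pi\sigma}=\sum\{k_j:\ \mathcal{S}_j=\sigma,\ \mathcal{P}_j=\pi\}$ (zero if no such reaction), $A=(a_{\pi\sigma})$, $\Delta$ the diagonal matrix whose $\rho$-th diagonal entry is the $\rho$-th column sum of $A$, and $L=\Delta-A$; then $Bv(x)=-L\,\mathrm{Exp}(Z^T\mathrm{Ln}(x))$. A complex-equilibrium is $x^*\in\mathbb{R}_+^m$ with $Bv(x^* )=0$; the network is complex-balanced if a complex-equilibrium exists. Given a complex-equilibrium $x^*$, set $K(x^* )=\mathrm{diag}_{i=1}^c(\exp(Z_i^T\mathrm{Ln}(x^* )))$ and $\mathcal{L}(x^* )=LK(x^* )$ (the weighted Laplacian); it satisfies $\mathbf{1}_c^T\mathcal{L}(x^* )=0$ and $\mathcal{L}(x^* )\mathbf{1}_c=0$, where $\mathbf{1}_c$ is the all-ones vector. *)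

From HB Require Import structures.
From mathcomp Require Import all_boot all_order all_algebra.
From mathcomp Require Import all_classical all_reals all_analysis.
Set Implicit Arguments. Unset Strict Implicit. Unset Printing Implicit Defensive.
Import Order.TTheory GRing.Theory Num.Theory.
Local Open Scope ring_scope.

Section CRN.
Variables (R : realType) (m c r : nat).
(* Z : complex-stoichiometric matrix with nonnegative integer entries *)
Variable Z : 'M[nat]_(m, c).
(* substrate and product complexes of each reaction, and rate constants *)
Variables (S P : 'I_r -> 'I_c) (k : 'I_r -> R).

Definition ZR : 'M[R]_(m, c) := map_mx (fun n : nat => n%:R) Z.

Definition LnV n (x : 'cV[R]_n) : 'cV[R]_n := \col_i ln (x i 0).
Definition ExpV n (y : 'cV[R]_n) : 'cV[R]_n := \col_i expR (y i 0).

Definition incidence : 'M[R]_(c, r) :=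
  \matrix_(a, j) ((a == P j)%:R - (a == S j)%:R).

Definition rates (x : 'cV[R]_m) : 'cV[R]_r :=
  \col_j (k j * expR (((col (S j) ZR)^T *m LnV x) 0 0)).

Definition Amat : 'M[R]_c :=
  \matrix_(p, s) \sum_(j < r | (S j == s) && (P j == p)) k j.

Definition Delta : 'M[R]_c :=
  \matrix_(p, s) ((p == s)%:R * \sum_(q < c) Amat q s).

Definition Lap : 'M[R]_c := Delta - Amat.

Definition complex_equilibrium (x : 'cV[R]_m) : Prop :=
  (forall i, 0 < x i 0) /\ incidence *m rates x = 0.

Definition Kmat (x : 'cV[R]_m) : 'M[R]_c :=
  diag_mx (\row_i expR ((ZR^T *m LnV x) i 0)).

Definition weighted_Laplacian (x : 'cV[R]_m) : 'M[R]_c := Lap *m Kmat x.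

End CRN.

From HB Require Import structures.
From mathcomp Require Import all_boot all_order all_algebra.
From mathcomp Require Import all_classical all_reals all_analysis.
From mathcomp Require Import ring.
Import Order.TTheory GRing.Theory Num.Theory.
Local Open Scope ring_scope.

(* Let w_j be the rate of reaction j at x*.  The quadratic form is
   sum_j w_j e^(g_(S j)) (g_(S j) - g_(P j)).  Complex balance B w = 0 gives
   sum_j w_j (e^(g_(P j)) - e^(g_(S j))) = 0; adding it turns the j-th summand
   into w_j times the gap between exp and its tangent line at g_(S j),
   evaluated at g_(P j).  By strict convexity of exp each gap is nonnegative
   and vanishes exactly when g_(S j) = g_(P j), i.e. when (B^T g)_j = 0. *)

Lemma form_mxE (R : pzSemiRingType) n (u v : 'cV[R]_n) (M : 'M[R]_n) :
  (u^T *m M *m v) 0 0 = \sum_p \sum_s u p 0 * M p s * v s 0.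
Proof.
rewrite mxE exchange_big /=; apply: eq_bigr => s _.
by rewrite mxE big_distrl; apply: eq_bigr => p _; rewrite mxE.
Qed.

Lemma sum_fibres {R : pzSemiRingType} {I J : finType} (p : I -> J)
    (a : I -> R) (f : J -> R) :
  \sum_y (\sum_(x | p x == y) a x) * f y = \sum_x a x * f (p x).
Proof.
rewrite [RHS](partition_big p xpredT) //=; apply: eq_bigr => y _.
by rewrite big_distrl; apply: eq_bigr => x /eqP <-.
Qed.

Lemma sum_pred1_natr {R : pzSemiRingType} {I : finType} (i : I) (f : I -> R) :
  \sum_a (a == i)%:R * f a = f i.
Proof.
by under eq_bigr do rewrite mulr_natl mulrb; rewrite -big_mkcond big_pred1_eq.
Qed.

Lemma psumr_pmul_eq0 (R : numDomainType) (I : finType) (w g : I -> R) :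
    (forall i, 0 < w i) -> (forall i, 0 <= g i) ->
  \sum_i w i * g i = 0 <-> forall i, g i = 0.
Proof.
move=> w_gt0 g_ge0; split=> [sum0 i | g0]; last first.
  by rewrite big1 // => i _; rewrite g0 mulr0.
have /eqP := psumr_eq0P (fun i _ => mulr_ge0 (ltW (w_gt0 i)) (g_ge0 i)) sum0 (i := i) isT.
by rewrite mulf_eq0 gt_eqF //= => /eqP.
Qed.

Section ExpTangent.
Variable R : realType.
Implicit Types a b : R.

Lemma expR_ge_tangent a b : expR a + expR a * (b - a) <= expR b.
Proof.
have -> : expR b = expR a * expR (b - a) by rewrite -expRD addrC subrK.
by rewrite -[X in X + _]mulr1 -mulrDr ler_pM2l ?expR_gt0 // expR_ge1Dx.
Qed.

Lemma expR_eq_tangent a b : (expR a + expR a * (b - a) == expR b) = (a == b).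
Proof.
have [<-|neq_ab] := eqVneq a b; first by rewrite subrr mulr0 addr0 eqxx.
rewrite lt_eqF //.
have -> : expR b = expR a * expR (b - a) by rewrite -expRD addrC subrK.
rewrite -[X in X + _]mulr1 -mulrDr ltr_pM2l ?expR_gt0 // expR_gt1Dx //.
by rewrite subr_eq0 eq_sym.
Qed.

End ExpTangent.

Section ComplexBalanced.
Context {R : realType} {m c r : nat} {Z : 'M[nat]_(m, c)}.
Context {S P : 'I_r -> 'I_c} {k : 'I_r -> R}.
Implicit Types u v : 'cV[R]_c.

Lemma Amat_formE u v :
  (u^T *m Amat S P k *m v) 0 0 = \sum_j k j * (u (P j) 0 * v (S j) 0).
Proof.
rewrite form_mxE pair_big /=.
rewrite -(sum_fibres (fun j => (P j, S j)) k (fun ps => u ps.1 0 * v ps.2 0)).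
apply: eq_bigr => -[p s] _; rewrite mxE mulrAC mulrC; congr (_ * _).
by apply: eq_bigl => j; rewrite xpair_eqE andbC.
Qed.

Lemma Delta_formE u v :
  (u^T *m Delta S P k *m v) 0 0 = \sum_j k j * (u (S j) 0 * v (S j) 0).
Proof.
rewrite form_mxE -(sum_fibres S k (fun s => u s 0 * v s 0)).
apply: eq_bigr => p _; rewrite (bigD1 p) //= big1 => [|s /negbTE neq_sp]; last first.
  by rewrite mxE eq_sym neq_sp mul0r mulr0 mul0r.
rewrite addr0 mxE eqxx mul1r mulrAC mulrC; congr (_ * _).
by rewrite [RHS](partition_big P xpredT) //=; apply: eq_bigr => q _; rewrite mxE.
Qed.

Lemma Lap_formE u v :
  (u^T *m Lap S P k *m v) 0 0 = \sum_j k j * v (S j) 0 * (u (S j) 0 - u (P j) 0).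
Proof.
rewrite /Lap mulmxBr mulmxBl mxE Delta_formE mxE Amat_formE -sumrB.
by apply: eq_bigr => j _; ring.
Qed.

Lemma Kmat_mulmx (x : 'cV[R]_m) v :
  Kmat Z x *m v = \col_s (Kmat Z x s s * v s 0).
Proof.
by apply/matrixP => s i; rewrite (ord1 i) /Kmat mul_diag_mx !mxE eqxx mulr1n.
Qed.

Lemma rates_Kmat (x : 'cV[R]_m) j : rates Z S k x j 0 = k j * Kmat Z x (S j) (S j).
Proof.
by rewrite !mxE eqxx mulr1n tr_col; under eq_bigr do rewrite mxE.
Qed.

Lemma weighted_Laplacian_formE (x : 'cV[R]_m) u v :
  (u^T *m weighted_Laplacian Z S P k x *m v) 0 0 =
  \sum_j rates Z S k x j 0 * v (S j) 0 * (u (S j) 0 - u (P j) 0).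
Proof.
rewrite /weighted_Laplacian mulmxA -mulmxA Lap_formE.
by apply: eq_bigr => j _; rewrite rates_Kmat Kmat_mulmx mxE mulrA.
Qed.

Lemma incidence_trE u j : ((incidence R S P)^T *m u) j 0 = u (P j) 0 - u (S j) 0.
Proof.
rewrite mxE; under eq_bigr do rewrite !mxE mulrBl.
by rewrite sumrB !sum_pred1_natr.
Qed.

Lemma incidence_balance u {w : 'cV[R]_r} :
  incidence R S P *m w = 0 -> \sum_j w j 0 * (u (P j) 0 - u (S j) 0) = 0.
Proof.
move=> Bw0; have : ((((incidence R S P)^T *m u)^T *m w) 0 0 = 0).
  by rewrite trmx_mul trmxK -mulmxA Bw0 mulmx0 mxE.
rewrite mxE => eq0; rewrite -[RHS]eq0; apply: eq_bigr => j _.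
by rewrite mxE incidence_trE mulrC.
Qed.

End ComplexBalanced.

Theorem lemma1 (R : realType) (m c r : nat) (Z : 'M[nat]_(m, c))
  (S P : 'I_r -> 'I_c) (k : 'I_r -> R) (hk : forall j, 0 < k j)
  (xs : 'cV[R]_m) (hxs : complex_equilibrium Z S P k xs)
  (gamma : 'cV[R]_c) :
  0 <= (gamma^T *m weighted_Laplacian Z S P k xs *m ExpV gamma) 0 0 /\
  ((gamma^T *m weighted_Laplacian Z S P k xs *m ExpV gamma) 0 0 = 0 <->
   (incidence R S P)^T *m gamma = 0).
Proof.
have [_ balanced] := hxs.
have rates_gt0 j : 0 < rates Z S k xs j 0.
  by rewrite rates_Kmat !mxE eqxx mulr1n mulr_gt0 ?expR_gt0.
pose gap j := expR (gamma (P j) 0) -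
  (expR (gamma (S j) 0) + expR (gamma (S j) 0) * (gamma (P j) 0 - gamma (S j) 0)).
have gap_ge0 j : 0 <= gap j by rewrite subr_ge0 expR_ge_tangent.
have -> : (gamma^T *m weighted_Laplacian Z S P k xs *m ExpV gamma) 0 0 =
    \sum_j rates Z S k xs j 0 * gap j.
  have exp_balance := incidence_balance (ExpV gamma) balanced.
  rewrite weighted_Laplacian_formE -[LHS]addr0 -[X in _ + X]exp_balance -big_split.
  by apply: eq_bigr => j _; rewrite /= !mxE /gap; ring.
split; first by apply: sumr_ge0 => j _; rewrite mulr_ge0 // ltW.
rewrite psumr_pmul_eq0 //; split => [gap0 | /matrixP Bgamma0 j].
  apply/matrixP => j i; rewrite (ord1 i) incidence_trE mxE.
  by move/eqP: (gap0 j); rewrite subr_eq0 eq_sym expR_eq_tangent => /eqP ->; rewrite subrr.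
move/eqP: (Bgamma0 j 0); rewrite incidence_trE mxE subr_eq0 => /eqP eq_PS.
by rewrite /gap eq_PS subrr mulr0 addr0 subrr.
Qed.
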